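(* Let $\mathcal{B}\subseteq\{1,2\}^3$ be a basic set with associated SNRE $F=\{F^{(a)},F^{(b)}\}$, sequences $(a_n),(b_n)$ and $S_2$-SFT $X^{\mathcal{B}}$. Suppose the symbol $1$ is a dominate symbol (i.e. $a_n\ge b_n$ for all $n\in\mathbb{N}$) and is essential (i.e. $a_n\ge2$ for some $n$). Then $F^{(a)}_1\neq y^2$. Furthermore: (1) if $F^{(a)}_1=x^2$, then $h(X^{\mathcal{B}})=\frac14\lim_{n\to\infty}\Big(\ln a_1+\sum_{j=1}^{n-1}2^{-j}\ln r^{(a)}_j\Big)$; (2) if $F^{(a)}_1=xy$ and $F^{(b)}_1=xy$, then $h(X^{\mathcal{B}})=\frac14\lim_{n\to\infty}\Big((\widehat v_1)^{[1]}+\sum_{j=1}^{n-1}2^{-j}(\ln\widehat r_j)^{[1]}\Big)$, where $\widehat v_1=R^{-1}v_1$, $\ln\widehat r_j=R^{-1}\ln r_j$; (3) if $F^{(a)}_1=xy$ and $F^{(b)}_1=y^2$, then $|B_n(X^{\mathcal{B}})|$ grows at most exponentially in $n$ (there is $c>0$ with $\ln|B_n(X^{\mathcal{B}})|\le cn$ for all $n$), and $h(X^{\mathcal{B}})=0$.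
   Context: $S_2$ is the free semigroup on two generators, identified with finite words over $\{1,2\}$ (root $\epsilon$). Alphabet $\mathcal{A}=\{1,2\}$; a basic set $\mathcal{B}\subseteq\mathcal{A}^3$ is a set of admissible 2-blocks $(i,i_1,i_2)$, $X^{\mathcal{B}}$ the associated $S_2$-SFT. $B_n(X^{\mathcal{B}})$ is the set of maps $u$ from words of length $\le n$ to $\mathcal{A}$ with $(u(w),u(w1),u(w2))\in\mathcal{B}$ for all words $w$ of length $\le n-1$; $a_n$, $b_n$ count those with $u(\epsilon)=1$, resp. $2$, so $|B_n(X^{\mathcal{B}})|=a_n+b_n$. The SNRE is $F^{(a)}(x,y)=\sum_{(1,i,j)\in\mathcal{B}}z_iz_j$, $F^{(b)}(x,y)=\sum_{(2,i,j)\in\mathcal{B}}z_iz_j$ ($z_1=x,z_2=y$), with $a_0=b_0=1$, $a_n=F^{(a)}(a_{n-1},b_{n-1})$, $b_n=F^{(b)}(a_{n-1},b_{n-1})$. Entropy: $h(X^{\mathcal{B}})=\limsup_{n}\frac{\ln(a_n+b_n)}{2^{n+1}-1}$ (known to be a limit). For $*\in\{a,b\}$, $F^{( * )}_1$ denotes the monomial (with coefficient $1$) among $x^2,xy,y^2$ occurring in $F^{( * )}$ with nonzero coefficient and with the highest power of $x$; and $r^{( * )}_j=F^{( * )}(a_j,b_j)/F^{( * )}_1(a_j,b_j)$. Let $v_1=(\ln a_1,\ln b_1)^T$, $\ln r_j=(\ln r^{(a)}_j,\ln r^{(b)}_j)^T$, $w^{[1]}$ the first entry of a vector $w$, and let $R$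 be an invertible $2\times2$ matrix with $R_{11}=1$ such that $\begin{pmatrix}1&1\\1&1\end{pmatrix}=R\begin{pmatrix}2&0\\0&0\end{pmatrix}R^{-1}$. *)

From HB Require Import structures.
From mathcomp Require Import all_boot all_order all_algebra.
From mathcomp Require Import all_classical all_reals all_analysis.
Set Implicit Arguments. Unset Strict Implicit. Unset Printing Implicit Defensive.
Import Order.TTheory GRing.Theory Num.Theory.
Local Open Scope ring_scope.

(* Alphabet A = {1,2}: symbol 1 is ord0, symbol 2 is ord_max in 'I_2. *)
Notation symb := 'I_2.
Definition s1 : symb := ord0.
Definition s2 : symb := ord_max.

(* A basic set: a set of admissible 2-blocks (i, i1, i2). *)
Notation basic_set := {set symb * symb * symb}.

Definition zvar (x y : nat) (i : symb) : nat := if i == s1 then x else y.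

(* F^(s)(x,y) = sum_{(s,i,j) in B} z_i z_j  (s = s1 gives F^(a), s = s2 gives F^(b)) *)
Definition Fpol (B : basic_set) (s : symb) (x y : nat) : nat :=
  \sum_(i < 2) \sum_(j < 2) ((s, i, j) \in B) * (zvar x y i * zvar x y j).

Fixpoint ab (B : basic_set) (n : nat) : nat * nat :=
  match n with
  | 0 => (1, 1)
  | m.+1 => let p := ab B m in (Fpol B s1 p.1 p.2, Fpol B s2 p.1 p.2)
  end.
Definition seqa B n := (ab B n).1.
Definition seqb B n := (ab B n).2.

(* |B_n(X^B)| = a_n + b_n *)
Definition cardBn B n := (seqa B n + seqb B n)%N.

Definition entropy (R : realType) (B : basic_set) : \bar R :=
  limn_esup (fun n => (ln ((cardBn B n)%:R : R) / (2 ^+ n.+1 - 1))%:E).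

Inductive monom := MX2 | MXY | MY2.

(* F_1^(s): the monomial with nonzero coefficient in F^(s) having the highest
   power of x (None if F^(s) = 0). *)
Definition F1 (B : basic_set) (s : symb) : option monom :=
  if (s, s1, s1) \in B then Some MX2
  else if ((s, s1, s2) \in B) || ((s, s2, s1) \in B) then Some MXY
  else if (s, s2, s2) \in B then Some MY2
  else None.

Definition monom_eval (m : monom) (x y : nat) : nat :=
  match m with MX2 => (x * x)%N | MXY => (x * y)%N | MY2 => (y * y)%N end.

Definition F1_eval (B : basic_set) (s : symb) (x y : nat) : nat :=
  match F1 B s with Some m => monom_eval m x y | None => 0%N end.

Definition rseq (R : realType) (B : basic_set) (s : symb) (j : nat) : R :=
  (Fpol B s (seqa B j) (seqb B j))%:R / (F1_eval B s (seqa B j) (seqb B j))%:R.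

Definition v1 (R : realType) (B : basic_set) : 'cV[R]_2 :=
  \col_(i < 2) (if i == s1 then ln ((seqa B 1)%:R : R) else ln ((seqb B 1)%:R : R)).
Definition lnr (R : realType) (B : basic_set) (j : nat) : 'cV[R]_2 :=
  \col_(i < 2) ln (rseq R B i j).

(* Under a_n >= b_n each F^(s) lies between its leading monomial F^(s)_1 and
   four times it, so every ln r^(s)_j lies in [0, ln 4].  Put P_n = ln a_n if
   F^(a)_1 = x^2, and P_n = (ln a_n + ln b_n)/2 (the first coordinate of
   R^-1 (ln a_n, ln b_n)^T) if F^(a)_1 = F^(b)_1 = xy.  Then P_(n+1) - 2 P_n is
   built from the ln r_j and so stays in a fixed interval: P_n / 2^n is
   nondecreasing and bounded, and the partial sums of the statement telescope
   to 2 P_n / 2^n.  As ln |B_n| = P_n + O(1), the entropy is half the limit of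
   P_n / 2^n.  If F^(b)_1 = y^2 then b_n = 1 and a_n <= 4^n, so |B_n| grows only
   exponentially.  Finally F^(a)_1 = y^2 would force a_n <= 1 for all n. *)

From HB Require Import structures.
From mathcomp Require Import all_boot all_order all_algebra.
From mathcomp Require Import all_classical all_reals all_analysis.
From mathcomp Require Import zify ring lra.
Import Order.TTheory GRing.Theory Num.Theory.
Import numFieldNormedType.Exports.
Local Open Scope classical_set_scope.
Local Open Scope ring_scope.

Lemma FpolE B s x y : Fpol B s x y =
  (((s, s1, s1) \in B) * (x * x) + (((s, s1, s2) \in B) + ((s, s2, s1) \in B)) * (x * y)
   + ((s, s2, s2) \in B) * (y * y))%N.
Proof.
rewrite /Fpol !big_ord_recl !big_ord0.
have -> : lift ord0 ord0 = s2 :> symb by apply/val_inj.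
rewrite /zvar /= [(y * x)%N]mulnC; ring.
Qed.

Lemma F1_eval_le_Fpol B s x y : (F1_eval B s x y <= Fpol B s x y)%N.
Proof.
rewrite /F1_eval /F1 FpolE.
by case: ((s, s1, s1) \in B); case: ((s, s1, s2) \in B); case: ((s, s2, s1) \in B);
  case: ((s, s2, s2) \in B) => /=; nia.
Qed.

Lemma Fpol_le_F1_eval B s {x y} : (y <= x)%N -> (Fpol B s x y <= 4 * F1_eval B s x y)%N.
Proof.
move=> yx; rewrite /F1_eval /F1 FpolE.
by case: ((s, s1, s1) \in B); case: ((s, s1, s2) \in B); case: ((s, s2, s1) \in B);
  case: ((s, s2, s2) \in B) => /=; nia.
Qed.

Lemma Fpol_Y2 B s : F1 B s = Some MY2 -> forall x y, Fpol B s x y = (y * y)%N.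
Proof.
move=> + x y; rewrite /F1 FpolE.
by case: ((s, s1, s1) \in B); case: ((s, s1, s2) \in B); case: ((s, s2, s1) \in B);
  case: ((s, s2, s2) \in B) => //= _; rewrite !mul0n mul1n.
Qed.

Lemma sq_le_pow2 n : (n.+1 * n.+1 + 4 <= 4 * 2 ^ n.+1)%N.
Proof. by elim: n => [//|n IH]; rewrite expnS; nia. Qed.

Section DyadicGrowth.
Variable R : realType.

Lemma limn_esup_EFin_cvg (u : R ^nat) (l : R) :
  u @ \oo --> l -> limn_esup (fun n => (u n)%:E) = l%:E.
Proof.
move=> ul; have uE : (fun n => (u n)%:E) @ \oo --> l%:E by apply: cvg_EFin => //; near=> n.
by rewrite (cvg_limn_einf_sup uE).2.
Unshelve. all: by end_near.
Qed.

Lemma cvg_shiftS_scale (S Q : R ^nat) (k L : R) :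
  (forall n, S n.+1 = k * Q n.+1) -> Q @ \oo --> L -> S @ \oo --> k * L.
Proof.
move=> SQ QL; rewrite -cvg_shiftS (funext SQ); apply: cvgM; first exact: cvg_cst.
by rewrite (cvg_shiftS Q).
Qed.

Lemma linear_div_pow2_cvg0 (x : R ^nat) (K : R) :
  (forall n, `|x n| <= K * n.+1%:R) -> (fun n => x n / (2 ^+ n.+1 - 1)) @ \oo --> 0.
Proof.
move=> xK; have K0 : 0 <= K by have := le_trans (normr_ge0 _) (xK 0%N); rewrite mulr1.
have bound n : `|x n / (2 ^+ n.+1 - 1)| <= 4 * K * n.+1%:R^-1.
  have sq : n.+1%:R * n.+1%:R + 4 <= 4 * 2 ^+ n.+1 :> R.
    by rewrite -natrM -natrX -[4 : R]/(4%N%:R) -natrD -natrM ler_nat sq_le_pow2.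
  have n1 : 1 <= n.+1%:R :> R by rewrite ler1n.
  have D0 : 0 < 2 ^+ n.+1 - 1 :> R by nra.
  rewrite normrM normfV (gtr0_norm D0) ler_pdivrMr // mulrAC ler_pdivlMr ?ltr0n //.
  apply: le_trans (ler_wpM2r (ler0n _ _) (xK n)) _; rewrite -mulrA; nra.
have h0 : (fun n => 4 * K * n.+1%:R^-1) @ \oo --> (0 : R).
  by rewrite -(mulr0 (4 * K)); apply: cvgM; [exact: cvg_cst | exact: cvg_harmonic].
apply: (squeeze_cvgr _ _ h0); last by rewrite -oppr0; apply: cvgN h0.
by near=> n; rewrite -ler_norml.
Unshelve. all: by end_near.
Qed.

Lemma doubling_cvg (P : R ^nat) (K : R) :
  (forall n, 0 <= P n.+1 - 2 * P n <= K) ->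
  exists L : R, (fun n => P n / 2 ^+ n) @ \oo --> L.
Proof.
move=> hP; set Q := fun n => P n / 2 ^+ n.
have QS n : Q n.+1 = Q n + (P n.+1 - 2 * P n) / 2 ^+ n.+1.
  by rewrite /Q exprS; field; rewrite expf_neq0.
have Q_nd : nondecreasing_seq Q.
  apply/nondecreasing_seqP => n; rewrite QS lerDl divr_ge0 ?exprn_ge0 //.
  by case/andP: (hP n).
have Q_ub n : Q n + K / 2 ^+ n <= Q 0%N + K.
  elim: n => [|n IH]; first by rewrite expr0 divr1.
  apply: le_trans IH; rewrite QS -addrA lerD2l.
  have -> : K / 2 ^+ n = (K + K) / 2 ^+ n.+1 by rewrite exprS; field; rewrite expf_neq0.
  by rewrite -mulrDl ler_pM2r ?invr_gt0 ?exprn_gt0 // lerD2r; case/andP: (hP n).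
exists (sup (range Q)); apply: nondecreasing_cvgn => //.
exists (Q 0%N + K) => _ [n _ <-]; apply: le_trans (Q_ub n); rewrite lerDl.
by rewrite divr_ge0 ?exprn_ge0 //; case/andP: (hP 0%N) => d0 /(le_trans d0).
Qed.

Lemma doubling_rate_cvg (P c : R ^nat) (a K L : R) :
  (fun n => P n / 2 ^+ n) @ \oo --> L -> (forall n, `|c n - a * P n| <= K) ->
  (fun n => c n / (2 ^+ n.+1 - 1)) @ \oo --> a * L / 2.
Proof.
move=> PL cK; have K0 : 0 <= K := le_trans (normr_ge0 _) (cK 0%N).
have split_rate n : c n / (2 ^+ n.+1 - 1) =
    (c n - a * P n) / (2 ^+ n.+1 - 1) + a / 2 * (P n / 2 ^+ n) * (1 + 1 / (2 ^+ n.+1 - 1)).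
  have t1 : 1 <= 2 ^+ n :> R by rewrite exprn_ege1 // ler1n.
  rewrite exprS; move: (2 ^+ n) t1 => t t1; field; apply/andP; split; rewrite gt_eqF //; lra.
have -> : a * L / 2 = 0 + a / 2 * L * (1 + 0) by rewrite add0r addr0 mulr1 mulrAC.
rewrite (funext split_rate); apply: cvgD.
  by apply: linear_div_pow2_cvg0 => n; apply: le_trans (cK n) (ler_peMr K0 _); rewrite ler1n.
apply: cvgM; first by apply: cvgM => //; exact: cvg_cst.
apply: cvgD; first exact: cvg_cst.
by apply: linear_div_pow2_cvg0 (1) _ => n; rewrite normr1 mul1r ler1n.
Qed.

Lemma telescope_pow2 (P : R ^nat) n :
  P 1%N + \sum_(1 <= j < n.+1) 2 ^- j * (P j.+1 - 2 * P j) = P n.+1 / 2 ^+ n.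
Proof.
elim: n => [|n IH]; first by rewrite big_geq // addr0 expr0 divr1.
rewrite big_nat_recr //= addrA IH exprS; field; exact: expf_neq0.
Qed.

End DyadicGrowth.

Lemma invmx_row0_avg (R : realFieldType) (Rm : 'M[R]_2) :
  Rm \in unitmx -> Rm ord0 ord0 = 1 ->
  const_mx 1 = Rm *m diag_mx (\row_(i < 2) (if i == s1 then 2%:R else 0)) *m invmx Rm ->
  forall u : 'cV[R]_2, (invmx Rm *m u) ord0 ord0 = (u ord0 ord0 + u ord_max ord0) / 2.
Proof.
set D := diag_mx _ => Ru R00 RDR u.
have right_eigen : const_mx 1 *m Rm = Rm *m D by rewrite RDR mulmxKV.
have left_eigen : invmx Rm *m const_mx 1 = D *m invmx Rm.
  by rewrite RDR !mulmxA mulVmx // mul1mx.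
have inv_left : invmx Rm *m Rm = 1%:M by rewrite mulVmx.
have E : lift ord0 ord0 = ord_max :> 'I_2 by apply/val_inj.
(* Row 0 of R^-1 is a left eigenvector of the all-ones matrix, so its entries
   agree; column 0 of R is (1, 1), so they sum to 1. *)
have := congr1 (fun M : 'M[R]_2 => M ord0 ord0) left_eigen.
have := congr1 (fun M : 'M[R]_2 => M ord0 ord0) inv_left.
have := congr1 (fun M : 'M[R]_2 => M ord_max ord0) right_eigen.
rewrite /D !mxE !big_ord_recl !big_ord0 !E !mxE /= R00.
rewrite !mulr1n !mulr0n !mul0r !mulr0 !mul1r !mulr1 !addr0 => R10 inv00 eig00.
have R10' : Rm ord_max ord0 = 1 by lra.
rewrite R10' mulr1 in inv00.
have -> : invmx Rm ord0 ord0 = 1 / 2 by lra.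
have -> : invmx Rm ord0 ord_max = 1 / 2 by lra.
by field.
Qed.

Lemma ln_natM {R : realType} {x y : nat} : (0 < x)%N -> (0 < y)%N ->
  ln ((x * y)%N%:R : R) = ln x%:R + ln y%:R.
Proof. by move=> x0 y0; rewrite natrM lnM // posrE ltr0n. Qed.

Lemma ler_ln_nat (R : realType) {x y : nat} : (0 < x)%N -> (x <= y)%N ->
  ln (x%:R : R) <= ln y%:R.
Proof. by move=> x0 xy; rewrite ler_ln ?posrE ?ltr0n ?ler_nat // (leq_trans x0). Qed.

Lemma seqaS B n : seqa B n.+1 = Fpol B s1 (seqa B n) (seqb B n).
Proof. by []. Qed.

Lemma seqbS B n : seqb B n.+1 = Fpol B s2 (seqa B n) (seqb B n).
Proof. by []. Qed.

Section SNRE.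
Variables (R : realType) (B : basic_set).

Lemma ln_rseq s n : (0 < F1_eval B s (seqa B n) (seqb B n))%N ->
  ln (rseq R B s n) =
  ln (Fpol B s (seqa B n) (seqb B n))%:R - ln (F1_eval B s (seqa B n) (seqb B n))%:R.
Proof.
move=> F0; have Fp0 := leq_trans F0 (F1_eval_le_Fpol B s _ _).
by rewrite /rseq ln_div // posrE ltr0n.
Qed.

Lemma entropy_of_doubling (P : R ^nat) (a K L : R) :
  (fun n => P n / 2 ^+ n) @ \oo --> L ->
  (forall n, `|ln ((cardBn B n)%:R : R) - a * P n| <= K) ->
  entropy R B = (a * L / 2)%:E.
Proof.
move=> PL cK; apply: limn_esup_EFin_cvg.
exact: (doubling_rate_cvg _ _ (fun n => ln ((cardBn B n)%:R : R)) _ _ _ PL cK).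
Qed.

Hypothesis dom : forall n, (seqb B n <= seqa B n)%N.

Lemma ln_rseq_bounds s n : (0 < F1_eval B s (seqa B n) (seqb B n))%N ->
  0 <= ln (rseq R B s n) <= ln 4.
Proof.
move=> F0; have Fp0 := leq_trans F0 (F1_eval_le_Fpol B s _ _).
have lo := ler_ln_nat R F0 (F1_eval_le_Fpol B s (seqa B n) (seqb B n)).
have hi := ler_ln_nat R Fp0 (Fpol_le_F1_eval B s (dom n)).
by rewrite ln_natM // in hi; rewrite ln_rseq //; apply/andP; split; lra.
Qed.

Lemma ln_cardBn_bounds n : (0 < seqa B n)%N ->
  ln ((seqa B n)%:R : R) <= ln ((cardBn B n)%:R : R) <= ln 2 + ln ((seqa B n)%:R : R).
Proof.
move=> a0; have c0 : (0 < cardBn B n)%N by rewrite addn_gt0 a0.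
have hi : (cardBn B n <= 2 * seqa B n)%N by rewrite /cardBn; have := dom n; lia.
have lo : (seqa B n <= cardBn B n)%N by rewrite /cardBn leq_addr.
by rewrite ler_ln_nat //=; have := ler_ln_nat R c0 hi; rewrite ln_natM.
Qed.

Lemma F1_s1_neq_Y2 : (exists n, (2 <= seqa B n)%N) -> F1 B s1 <> Some MY2.
Proof.
move=> [n a2] /Fpol_Y2 FY; suff a_le1 m : (seqa B m <= 1)%N by have := a_le1 n; lia.
by elim: m => [//|m IH]; rewrite seqaS FY; have := dom m; nia.
Qed.

Lemma entropy_F1_X2 : F1 B s1 = Some MX2 ->
  exists L : R,
    (fun n : nat => ln ((seqa B 1)%:R : R) +
       \sum_(1 <= j < n) (2%:R ^- j) * ln (rseq R B s1 j)) @ \oo --> L /\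
    entropy R B = (L / 4%:R)%:E.
Proof.
move=> FX; have F1E n : F1_eval B s1 (seqa B n) (seqb B n) = (seqa B n * seqa B n)%N.
  by rewrite /F1_eval FX.
have a_gt0 n : (0 < seqa B n)%N.
  elim: n => [//|n IH]; rewrite seqaS (leq_trans _ (F1_eval_le_Fpol _ _ _ _)) //.
  by rewrite F1E muln_gt0 IH.
have F1_gt0 n : (0 < F1_eval B s1 (seqa B n) (seqb B n))%N by rewrite F1E muln_gt0 a_gt0.
pose P n := ln ((seqa B n)%:R : R).
have lnrE n : ln (rseq R B s1 n) = P n.+1 - 2 * P n.
  by rewrite ln_rseq // F1E ln_natM // -seqaS /P; lra.
have [L PL] : exists L : R, (fun n => P n / 2 ^+ n) @ \oo --> L.
  by apply: (doubling_cvg _ _ (ln 4)) => n; rewrite -lnrE ln_rseq_bounds.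
exists (2 * L); split.
  apply: (cvg_shiftS_scale _ _ _ _ _ _ PL) => n /=.
  under eq_bigr do rewrite lnrE.
  by rewrite telescope_pow2 exprS; field; rewrite expf_neq0.
rewrite (entropy_of_doubling _ 1 (ln 2) _ PL); first by congr EFin; field.
move=> n; have := ln_cardBn_bounds _ (a_gt0 n); rewrite /P mul1r ler_norml.
by have := ln_ge0 (ler1n R 2); lra.
Qed.

Lemma entropy_F1_XY_XY : F1 B s1 = Some MXY -> F1 B s2 = Some MXY ->
  forall Rm : 'M[R]_2,
    Rm \in unitmx -> Rm ord0 ord0 = 1 ->
    const_mx 1 = Rm *m diag_mx (\row_(i < 2) (if i == s1 then 2%:R else 0)) *m invmx Rm ->
  exists L : R,
    (fun n : nat => (invmx Rm *m v1 R B) ord0 ord0 +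
       \sum_(1 <= j < n) (2%:R ^- j) * (invmx Rm *m lnr R B j) ord0 ord0) @ \oo --> L /\
    entropy R B = (L / 4%:R)%:E.
Proof.
move=> FaXY FbXY Rm Ru R00 RDR.
have F1aE n : F1_eval B s1 (seqa B n) (seqb B n) = (seqa B n * seqb B n)%N.
  by rewrite /F1_eval FaXY.
have F1bE n : F1_eval B s2 (seqa B n) (seqb B n) = (seqa B n * seqb B n)%N.
  by rewrite /F1_eval FbXY.
have ab_gt0 n : (0 < seqa B n * seqb B n)%N.
  elim: n => [//|n IH]; have := F1_eval_le_Fpol B s1 (seqa B n) (seqb B n).
  have := F1_eval_le_Fpol B s2 (seqa B n) (seqb B n).
  by rewrite F1aE F1bE -seqaS -seqbS muln_gt0; lia.
have a_gt0 n : (0 < seqa B n)%N by have := ab_gt0 n; rewrite muln_gt0 => /andP[].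
have b_gt0 n : (0 < seqb B n)%N by have := ab_gt0 n; rewrite muln_gt0 => /andP[].
have lnaS n : ln ((seqa B n.+1)%:R : R) =
    ln (seqa B n)%:R + ln (seqb B n)%:R + ln (rseq R B s1 n).
  by rewrite ln_rseq F1aE // ln_natM // -seqaS; lra.
have lnbS n : ln ((seqb B n.+1)%:R : R) =
    ln (seqa B n)%:R + ln (seqb B n)%:R + ln (rseq R B s2 n).
  by rewrite ln_rseq F1bE // ln_natM // -seqbS; lra.
have lnr_bounds n : 0 <= ln (rseq R B s1 n) <= ln 4 /\ 0 <= ln (rseq R B s2 n) <= ln 4.
  by rewrite !ln_rseq_bounds ?F1aE ?F1bE.
pose P n := (ln ((seqa B n)%:R : R) + ln ((seqb B n)%:R : R)) / 2.
have lnrE n : (ln (rseq R B s1 n) + ln (rseq R B s2 n)) / 2 = P n.+1 - 2 * P n.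
  by rewrite /P lnaS lnbS; lra.
have [L PL] : exists L : R, (fun n => P n / 2 ^+ n) @ \oo --> L.
  apply: (doubling_cvg _ _ (ln 4)) => n; rewrite -lnrE.
  by have [/andP[? ?] /andP[? ?]] := lnr_bounds n; apply/andP; split; lra.
exists (2 * L); split.
  apply: (cvg_shiftS_scale _ _ _ _ _ _ PL) => n /=.
  rewrite invmx_row0_avg // !mxE /=.
  under eq_bigr do rewrite invmx_row0_avg // !mxE /= lnrE.
  by rewrite (telescope_pow2 _ P) exprS; field; rewrite expf_neq0.
rewrite (entropy_of_doubling _ 1 (ln 2 + ln 4) _ PL); first by congr EFin; field.
have gap n : 0 <= ln ((seqa B n)%:R : R) - ln (seqb B n)%:R <= ln 4.
  have ba := ler_ln_nat R (b_gt0 n) (dom n).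
  have l4 : 0 <= ln (4 : R) by rewrite ln_ge0 // ler1n.
  case: n ba => [|n] ba; first by rewrite /seqa /seqb /= subrr lexx.
  have [/andP[? ?] /andP[? ?]] := lnr_bounds n.
  by rewrite lnaS lnbS in ba *; apply/andP; split; lra.
move=> n; have := ln_cardBn_bounds _ (a_gt0 n); have := gap n.
by rewrite /P mul1r ler_norml => /andP[? ?] /andP[? ?]; apply/andP; split; lra.
Qed.

Lemma entropy_F1_XY_Y2 : F1 B s1 = Some MXY -> F1 B s2 = Some MY2 ->
  (exists c : R, 0 < c /\
     forall n : nat, (1 <= n)%N -> ln ((cardBn B n)%:R : R) <= c * n%:R) /\
  entropy R B = 0%:E.
Proof.
move=> FaXY FbY2.
have b1 n : seqb B n = 1%N.
  by elim: n => [//|n IH]; rewrite seqbS (Fpol_Y2 _ _ FbY2) IH.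
have a_le n : (seqa B n <= 4 ^ n)%N.
  elim: n => [//|n IH]; have := Fpol_le_F1_eval B s1 (dom n).
  by rewrite -seqaS /F1_eval FaXY /= b1 muln1 expnS; lia.
have card_gt0 n : (0 < cardBn B n)%N by rewrite /cardBn b1 addn1.
have ln_card n : ln ((cardBn B n)%:R : R) <= ln 4 * n.+1%:R.
  have card_le : (cardBn B n <= 4 ^ n.+1)%N.
    by rewrite /cardBn b1 expnS; have := a_le n; have := expn_gt0 4 n; lia.
  by have := ler_ln_nat R (card_gt0 n) card_le; rewrite natrX lnXn ?ltr0n // mulr_natr.
have l4 : 0 < ln (4 : R) by rewrite ln_gt0 // ltr1n.
split.
  exists (2 * ln 4); split; first by rewrite mulr_gt0.
  move=> n n1; apply: le_trans (ln_card n) _.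
  have : 1 <= n%:R :> R by rewrite ler1n.
  by rewrite -[n.+1]addn1 natrD mulr1n; nra.
rewrite /entropy; apply: limn_esup_EFin_cvg.
apply: (linear_div_pow2_cvg0 _ _ (ln 4)) => n.
by rewrite ger0_norm ?ln_card // ln_ge0 // ler1n card_gt0.
Qed.

End SNRE.

Theorem proposition3 (R : realType) (B : basic_set) :
  (forall n, (seqb B n <= seqa B n)%N) ->
  (exists n, (2 <= seqa B n)%N) ->
  F1 B s1 <> Some MY2 /\
  (F1 B s1 = Some MX2 ->
     exists L : R,
       (fun n : nat => ln ((seqa B 1)%:R : R) +
          \sum_(1 <= j < n) (2%:R ^- j) * ln (rseq R B s1 j)) @ \oo --> L /\
       entropy R B = (L / 4%:R)%:E) /\
  (F1 B s1 = Some MXY -> F1 B s2 = Some MXY ->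
     forall Rm : 'M[R]_2,
       Rm \in unitmx -> Rm ord0 ord0 = 1 ->
       const_mx 1 = Rm *m diag_mx (\row_(i < 2) (if i == s1 then 2%:R else 0)) *m invmx Rm ->
     exists L : R,
       (fun n : nat => (invmx Rm *m v1 R B) ord0 ord0 +
          \sum_(1 <= j < n) (2%:R ^- j) * (invmx Rm *m lnr R B j) ord0 ord0) @ \oo --> L /\
       entropy R B = (L / 4%:R)%:E) /\
  (F1 B s1 = Some MXY -> F1 B s2 = Some MY2 ->
     (exists c : R, 0 < c /\
        forall n : nat, (1 <= n)%N -> ln ((cardBn B n)%:R : R) <= c * n%:R) /\
     entropy R B = 0%:E).
Proof.
move=> dom essential; split; first exact: F1_s1_neq_Y2.
split; first exact: entropy_F1_X2.
split; first exact: entropy_F1_XY_XY.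
exact: entropy_F1_XY_Y2.
Qed.
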